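(* Let $\mathcal C$ be a class of Baire class 1 functions on compact Polish spaces which contains all functions that are differences of bounded semi-continuous functions. Let $T$ be a complete theory. Then $T$ is stable if and only if $T$ has NIP and $T$ is $\mathcal C$.
   Context: For a formula $\phi(x,y)$ and a countable sequence $(a_i:i<\omega)$, the functions $\phi(a_i,y)$ are regarded as continuous $\{0,1\}$-valued functions on the compact Polish space $S_{\tilde\phi}(\{a_i\})$ of complete $\tilde\phi$-types over $\{a_i:i<\omega\}$ ($\tilde\phi(y,x)=\phi(x,y)$), sending $q$ to $1$ iff $\phi(a_i,y)\in q$. $T$ is $\mathcal C$ means: for every formula $\phi(x,y)$ and every infinite sequence $(a_i:i<\omega)$ in the monster model, if $(\phi(a_i,y):i<\omega)$ converges pointwise to a function in $\mathcal C$, then there is no infinite sequence $(b_j:j<\omega)$ such that $\phi(a_i,b_j)$ holds iff $i<j$. A function is Baire class 1 if it is a pointwise limit of continuous functions; it is DBSC if it equals $F_1-F_2$ for bounded semi-continuous $F_1,F_2$. $T$ is stable if no formula has the order property (no $(a_i),(b_j)$ with $\phi(a_i,b_j)\iff i<j$); $T$ has NIP if no formula $\phi(x,y)$ admits $(a_i:i<\omega)$ such that for every $S\subseteq\omega$ some $b$ satisfies $\phi(a_i,b)\iff i\in S$. *)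

From HB Require Import structures.
From mathcomp Require Import all_boot all_order all_algebra.
From mathcomp Require Import all_classical all_reals all_analysis.
From Stdlib Require List.
Set Implicit Arguments. Unset Strict Implicit. Unset Printing Implicit Defensive.
Import Order.TTheory GRing.Theory Num.Theory.
Import numFieldNormedType.Exports.
Local Open Scope classical_set_scope.
Local Open Scope ring_scope.

Record language := Language {
  func : Type; farity : func -> nat;
  rel : Type;  rarity : rel -> nat }.

Inductive term (L : language) : Type :=
  | tvar : nat -> term L
  | tapp : forall f : func L, ('I_(farity f) -> term L) -> term L.

Inductive formula (L : language) : Type :=
  | fbot : formula L
  | feq : term L -> term L -> formula L
  | frel : forall r : rel L, ('I_(rarity r) -> term L) -> formula L
  | fimp : formula L -> formula L -> formula L
  | fall : nat -> formula L -> formula L.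

Record structure (L : language) := Structure {
  dom :> Type;
  funs : forall f : func L, ('I_(farity f) -> dom) -> dom;
  rels : forall r : rel L, ('I_(rarity r) -> dom) -> Prop }.

Section Semantics.
Variables (L : language) (M : structure L).

Fixpoint teval (e : nat -> M) (t : term L) : M :=
  match t with
  | tvar i => e i
  | tapp f ts => @funs L M f (fun j => teval e (ts j))
  end.

Definition upd (e : nat -> M) (v : nat) (m : M) : nat -> M :=
  fun i => if i == v then m else e i.

Fixpoint sat (e : nat -> M) (phi : formula L) : Prop :=
  match phi with
  | fbot => False
  | feq t u => teval e t = teval e u
  | frel r ts => @rels L M r (fun j => teval e (ts j))
  | fimp p q => sat e p -> sat e q
  | fall v p => forall m : M, sat (upd e v m) p
  end.

Fixpoint toccurs (i : nat) (t : term L) : Prop :=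
  match t with
  | tvar j => i = j
  | tapp f ts => exists j, toccurs i (ts j)
  end.

Fixpoint ffree (i : nat) (phi : formula L) : Prop :=
  match phi with
  | fbot => False
  | feq t u => toccurs i t \/ toccurs i u
  | frel r ts => exists j, toccurs i (ts j)
  | fimp p q => ffree i p \/ ffree i q
  | fall v p => i <> v /\ ffree i p
  end.

(* phi(x,y) with x = (v_0..v_{n-1}), y = (v_n..v_{n+k-1}) *)
Definition is_formula_xy (n k : nat) (phi : formula L) : Prop :=
  forall i, ffree i phi -> (i < n + k)%N.

Definition envxy (n k : nat) (a : 'I_n -> M) (b : 'I_k -> M) (d : M) : nat -> M :=
  fun i => match (insub i : option 'I_n) with
           | Some i' => a i'
           | None => match (insub (i - n)%N : option 'I_k) with
                     | Some j => b j
                     | None => d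
                     end
           end.

(* M |= phi(a, b) ; the default d is irrelevant for phi(x,y) *)
Definition holds (n k : nat) (phi : formula L) (a : 'I_n -> M) (b : 'I_k -> M) : Prop :=
  forall d : M, sat (envxy a b d) phi.

(* aleph_1-saturation: every finitely satisfiable set of formulas in the free
   variable v_0 with parameters from a countable set (range g) is realized.
   Each element of p is a formula together with an assignment of the other
   variables to parameters. *)
Definition aleph1_saturated : Prop :=
  forall (g : nat -> M) (p : formula L * (nat -> M) -> Prop),
    (forall x, p x -> forall i, i <> 0%N -> exists j, x.2 i = g j) ->
    (forall s : seq (formula L * (nat -> M)), (forall x, Stdlib.Lists.List.In x s -> p x) ->
        exists m : M, forall x, Stdlib.Lists.List.In x s -> sat (upd x.2 0 m) x.1) ->
    exists m : M, forall x, p x -> sat (upd x.2 0 m) x.1.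

Definition order_property (n k : nat) (phi : formula L) : Prop :=
  exists (a : nat -> 'I_n -> M) (b : nat -> 'I_k -> M),
    forall i j : nat, holds phi (a i) (b j) <-> (i < j)%N.

Definition stable : Prop :=
  forall n k (phi : formula L), is_formula_xy n k phi -> ~ order_property n k phi.

Definition NIP : Prop :=
  forall n k (phi : formula L), is_formula_xy n k phi ->
    ~ exists a : nat -> 'I_n -> M,
        forall S : set nat, exists b : 'I_k -> M,
          forall i : nat, holds phi (a i) b <-> S i.

(* ---------- the type space S_{phi~}({a_i}) ----------
   A complete phi~-type q over {a_i : i < omega} is identified with the
   sequence of truth values (q i = true iff phi(a_i,y) \in q), i.e. with a
   point of the Cantor space; these are exactly the finitely satisfiable
   patterns.  The function phi(a_i,y) is the i-th coordinate map. *)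
Definition phi_type_space (n k : nat) (phi : formula L) (a : nat -> 'I_n -> M)
  : set cantor_space :=
  [set q : cantor_space | forall N : nat, exists b : 'I_k -> M,
      forall i : nat, (i < N)%N -> (holds phi (a i) b <-> q i = true)].

(* T is C, for a class Cl of real functions on closed subsets of Cantor space
   (Cl K f means: the restriction of f to K belongs to the class) *)
Definition is_C (R : realType) (Cl : set cantor_space -> (cantor_space -> R) -> Prop)
  : Prop :=
  forall n k (phi : formula L) (a : nat -> 'I_n -> M), is_formula_xy n k phi ->
    (exists g : cantor_space -> R,
        Cl (phi_type_space k phi a) g /\
        forall q, phi_type_space k phi a q ->
          (fun i : nat => ((q i : bool)%:R : R)) @ \oo --> g q) ->
    ~ exists b : nat -> 'I_k -> M,
        forall i j : nat, holds phi (a i) (b j) <-> (i < j)%N.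

End Semantics.

Section Functions.
Variables (R : realType) (X : topologicalType).

Definition baire1_on (K : set X) (f : X -> R) : Prop :=
  exists fn : nat -> X -> R,
    (forall m, {within K, continuous (fn m)}) /\
    forall x, K x -> (fun m => fn m x) @ \oo --> f x.

Definition bounded_on (K : set X) (f : X -> R) : Prop :=
  exists B : R, forall x, K x -> `|f x| <= B.

Definition lsc_on (K : set X) (f : X -> R) : Prop :=
  forall x, K x -> forall e : R, 0 < e ->
    \forall y \near within K (nbhs x), f x - e < f y.

Definition usc_on (K : set X) (f : X -> R) : Prop :=
  forall x, K x -> forall e : R, 0 < e ->
    \forall y \near within K (nbhs x), f y < f x + e.

Definition semicontinuous_on (K : set X) (f : X -> R) : Prop :=
  lsc_on K f \/ usc_on K f.

Definition DBSC_on (K : set X) (f : X -> R) : Prop :=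
  exists F1 F2 : X -> R,
    bounded_on K F1 /\ semicontinuous_on K F1 /\
    bounded_on K F2 /\ semicontinuous_on K F2 /\
    forall x, K x -> f x = F1 x - F2 x.

End Functions.

From mathcomp Require Import all_boot all_order all_algebra.
From mathcomp Require Import all_classical all_reals all_analysis.
From mathcomp Require Import zify.
From Stdlib Require List.
Import Order.TTheory GRing.Theory Num.Theory.
Import numFieldNormedType.Exports.
Set Implicit Arguments. Unset Strict Implicit.
Local Open Scope classical_set_scope.

(* Stability gives NIP (an infinite shattered sequence carries the order
   property) and C (which only restricts sequences with the order property).
   Conversely let (a_i, b_j) witness the order property for phi.  C forces
   alternations phi(a_i, y) = 1, 0, 1, ... of every finite length along every
   subsequence of (a_i): otherwise every type q in the type space alternates
   fewer than m times, so phi(a_i, q) converges to the parity of the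
   alternation rank of q, and since that rank is bounded and lower
   semicontinuous this limit is uphalf(rank) - half(rank), a DBSC function.
   By Ramsey's theorem some subsequence realizes every alternation of length
   2r, so phi shatters r of its elements; aleph_1-saturation then yields an
   infinite shattered sequence, contradicting NIP. *)

Section Syntax.
Variables (L : language) (M : structure L).
Implicit Types (e : nat -> M) (p q : formula L).

Fixpoint eq_teval e e' (t : term L) {struct t} :
  (forall i, toccurs i t -> e i = e' i) -> teval e t = teval e' t.
Proof.
case: t => [i|f ts] /= ee'; first exact: ee'.
congr (@funs L M f); apply: funext => j; apply: eq_teval => i Hi.
by apply: ee'; exists j.
Qed.

Lemma eq_sat p e e' : (forall i, ffree i p -> e i = e' i) -> sat e p <-> sat e' p.
Proof.
elim: p e e' => [|t u|r ts|p IHp q IHq|v p IHp] e e' ee' /=.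
- by [].
- by rewrite !(eq_teval (e' := e')) // => i Hi; apply: ee'; [right|left].
- by rewrite (_ : (fun j => _) = (fun j => teval e' (ts j))) //; apply: funext => j;
    apply: eq_teval => i Hi; apply: ee'; exists j.
- by rewrite (IHp e e') ?(IHq e e') // => i Hi; apply: ee'; [right|left].
- split=> H m; [rewrite -(IHp (upd e v m))|rewrite (IHp _ (upd e' v m))] => // i Hi;
    rewrite /upd; case: eqP => // /eqP iv; apply: ee'; split=> //; exact/eqP.
Qed.

Definition fnot p := fimp p (fbot L).
Definition fand p q := fnot (fimp p (fnot q)).
Definition fex v p := fnot (fall v (fnot p)).
Definition fsign (b : bool) p := if b then p else fnot p.
Definition fconj (s : seq (formula L)) := foldr fand (fnot (fbot L)) s.
Definition fexs (vs : seq nat) p := foldr fex p vs.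

Fixpoint fconjn (f : nat -> formula L) (r : nat) : formula L :=
  if r is r'.+1 then fand (fconjn f r') (f r') else fnot (fbot L).

(* [p] with [v_s] substituted for [v_l], expressed without a substitution
   operation on formulas. *)
Definition frename (l s : nat) p := fall l (fimp (feq (tvar L l) (tvar L s)) p).

Fixpoint frenames (src : nat -> nat) (N : nat) p : formula L :=
  if N is N'.+1 then frename N' (src N') (frenames src N' p) else p.

Definition finst (n k : nat) (xs ys : nat -> nat) p :=
  frenames (fun i => if (i < n)%N then xs i else ys (i - n)) (n + k) p.

Lemma sat_fand e p q : sat e (fand p q) <-> sat e p /\ sat e q.
Proof.
split=> [H|[Hp Hq] H]; last exact: H Hp Hq.
by split; apply: contrapT => Hn; apply: H => Hp // Hq; apply: Hn.
Qed.

Lemma sat_fex e v p : sat e (fex v p) <-> exists m, sat (upd e v m) p.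
Proof.
split=> [H|[m Hm] H]; last exact: H m Hm.
by apply: contrapT => Hn; apply: H => m Hm; apply: Hn; exists m.
Qed.

Lemma sat_fsign e b p : sat e (fsign b p) <-> (sat e p <-> b).
Proof.
case: b => /=; first by split=> [Hp|[_ /(_ isT)]] //; split.
split=> [np|[pf _] Hp]; first by split=> // /np.
by have := pf Hp.
Qed.

Lemma sat_fconj e s : sat e (fconj s) <-> forall p, List.In p s -> sat e p.
Proof.
elim: s => [|p s IH]; first by split=> [_ p []|_ []].
rewrite [fconj _]/= sat_fand IH /=.
by split=> [[Hp Hs] x [<-|/Hs]|H] //; split=> [|x xs]; apply: H; [left|right].
Qed.

Lemma sat_fconjn e f r : sat e (fconjn f r) <-> forall i, (i < r)%N -> sat e (f i).
Proof.
elim: r => [|r IH]; first by split=> [_ i //|_ []].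
rewrite [fconjn _ _]/= sat_fand IH; split=> [[H1 H2] i|H].
  by rewrite ltnS leq_eqVlt => /orP[/eqP->//|]; apply: H1.
by split=> [i ir|]; apply: H => //; apply: ltnW.
Qed.

Lemma sat_fexs e vs p :
  sat e (fexs vs p) <-> exists f : nat -> M, sat (fun i => if i \in vs then f i else e i) p.
Proof.
elim: vs e => [|v vs IH] e; first by split=> [H|[f]]; [exists e|].
rewrite (sat_fex e v (fexs vs p)); split=> [[m /IH [f Hf]]|[f Hf]].
  exists (fun i => if i \in vs then f i else m); congr (sat _ p): Hf.
  by apply: funext => i; rewrite in_cons /upd; case: (i \in vs); case: eqP; rewrite ?orbT.
exists (f v); apply/IH; exists f; congr (sat _ p): Hf.
by apply: funext => i; rewrite in_cons /upd; case: (i \in vs); case: eqP => [->|]; rewrite ?orbT.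
Qed.

Lemma sat_frename e l s p : l <> s -> sat e (frename l s p) <-> sat (upd e l (e s)) p.
Proof.
move=> /eqP ls /=; rewrite /upd eqxx eq_sym (negbTE ls).
by split=> [|H m ->]; [apply|].
Qed.

Lemma sat_frenames src N p e : (forall i, N <= src i)%N ->
  sat e (frenames src N p) <-> sat (fun i => if (i < N)%N then e (src i) else e i) p.
Proof.
elim: N e => [|N IH] e srcN.
  by rewrite (_ : (fun i => _) = e) //; apply: funext.
rewrite sat_frename; last by move=> E; have := srcN N; rewrite -E ltnn.
rewrite IH => [|i]; last exact: ltnW.
rewrite (_ : (fun i => _) = (fun i => if (i < N.+1)%N then e (src i) else e i)) //.
apply: funext => i; rewrite /upd (gtn_eqF (srcN i)).
have [iN|Ni] := ltnP i N; first by rewrite ltnS ltnW.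
by case: eqP => [->|/eqP iN]; rewrite ?ltnSn // ltnS leq_eqVlt ltnNge Ni (negbTE iN).
Qed.

Lemma sat_finst n k phi xs ys e : is_formula_xy n k phi ->
  (forall i, n + k <= xs i)%N -> (forall j, n + k <= ys j)%N ->
  sat e (finst n k xs ys phi) <->
  holds phi (fun l : 'I_n => e (xs l)) (fun j : 'I_k => e (ys j)).
Proof.
move=> phixy xsnk ysnk; rewrite /finst sat_frenames; last by move=> i; case: ifP.
suff env_eq d : sat (fun i => if (i < n + k)%N then e (if (i < n)%N then xs i else ys (i - n))
  else e i) phi <-> sat (envxy (fun l : 'I_n => e (xs l)) (fun j : 'I_k => e (ys j)) d) phi.
  by split=> [H d|H]; [apply/env_eq|apply/(env_eq (e 0))].
apply: eq_sat => i /phixy ink; rewrite ink /envxy.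
case: insubP => [i' -> <-|] //; rewrite -leqNgt => nlei; rewrite ltnNge nlei /=.
by case: insubP => [j' _ <-|] //; rewrite ltn_subLR // ink.
Qed.

End Syntax.

Lemma leq_bigmax_In (T : Type) (F : T -> nat) (s : seq T) x :
  List.In x s -> (F x <= \max_(y <- s) F y)%N.
Proof.
elim: s => [//|y s IH] /= [<-|/IH xs]; rewrite big_cons; first exact: leq_maxl.
exact: leq_trans xs (leq_maxr _ _).
Qed.

Lemma In_cover (A B : Type) (F : seq A -> B) (l : seq B) :
  (forall x, List.In x l -> exists s, x = F s) ->
  exists s0, forall x, List.In x l ->
    exists2 s, x = F s & forall a, List.In a s -> List.In a s0.
Proof.
elim: l => [|x l IH] lF; first by exists [::].
have [s0 Hs0] := IH (fun y yl => lF y (or_intror yl)).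
have [s ->] := lF x (or_introl erefl).
exists (s ++ s0) => y [<-|/Hs0 [s' -> s's0]].
  by exists s => // a sa; apply: List.in_or_app; left.
by exists s' => // a /s's0 as0; apply: List.in_or_app; right.
Qed.

Section CountableTypes.
Variables (L : language) (M : structure L).
Hypothesis Msat : aleph1_saturated M.
Variable U : nat -> nat.
Hypotheses (U_neq0 : forall t, U t <> 0) (U_ge : forall t, (t <= U t)%N).

Definition depends_only (phi : formula L) (D : set nat) :=
  forall e1 e2 : nat -> M, (forall i, D i -> e1 i = e2 i) -> (sat e1 phi <-> sat e2 phi).

Definition vars_before (B : nat) : set nat :=
  [set i | i <> 0 /\ forall t, (B <= t)%N -> i <> U t].

Definition agree_off (T : nat) (w e : nat -> M) :=
  forall i, (forall t, (T <= t)%N -> i <> U t) -> w i = e i.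

Definition finsat_from (I : Type) (th : I -> formula L) (T : nat) (e : nat -> M) :=
  forall s : seq I, exists2 w, agree_off T w e & forall i, List.In i s -> sat w (th i).

Section Step.
Variables (I : Type) (th : I -> formula L) (bnd : I -> nat).
Hypothesis th_dep : forall i, depends_only (th i) (vars_before (bnd i)).

Lemma finsat_from_step T e :
  finsat_from th T e -> exists m, finsat_from th T.+1 (upd e (U T) m).
Proof.
(* Saturation realizes, as the new value of [U T], all the formulas "some
   values of the later variables satisfy s" over the parameters [e]. *)
move=> finT.
pose later s := map U (iota T.+1 (\max_(i <- s) bnd i)).
pose chi s := frename (U T) 0 (fexs (later s) (fconj (map th s))).
pose mix s f m := fun i => if i \in later s then f i else upd e (U T) m i.
have laterP s j : j \in later s -> exists2 t, (T < t)%N & j = U t.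
  by move=> /mapP [t]; rewrite mem_iota => /andP[Tt _] ->; exists t.
have chiP s m : sat (upd e 0 m) (chi s) <->
    exists f, forall i, List.In i s -> sat (mix s f m) (th i).
  rewrite sat_frename //; have -> : upd e 0 m 0 = m by rewrite /upd eqxx.
  have env_mix f i : sat (fun j => if j \in later s then f j else upd (upd e 0 m) (U T) m j)
      (th i) <-> sat (mix s f m) (th i).
    apply: th_dep => j [j0 _]; rewrite /mix /upd; case: ifP => //= _.
    by case: eqP => // _; rewrite (introF eqP j0).
  rewrite sat_fexs; split=> [[f /sat_fconj Hf]|[f Hf]]; exists f.
    by move=> i si; apply/env_mix; apply: Hf; apply: List.in_map.
  by apply/sat_fconj => _ /List.in_map_iff [i [<- si]]; apply/env_mix; apply: Hf.
have [m Hm] : exists m, forall x, (exists s, x = (chi s, e)) -> sat (upd x.2 0 m) x.1.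
  apply: (@Msat e (fun x => exists s, x = (chi s, e))) => [x [s ->] i _|l Hl]; first by exists i.
  have [s0 Hs0] := In_cover (F := fun s => (chi s, e)) Hl.
  have [w we ws0] := finT s0.
  exists (w (U T)) => _ /Hs0 [s -> ss0]; apply/chiP; exists w => i si.
  apply/(th_dep (e2 := w)); last exact: ws0 (ss0 _ si).
  move=> j [_ j_early]; rewrite /mix; case: ifP => // j_later; rewrite /upd.
  case: eqP => [->//|jUT]; apply/esym/(we j) => t Tt jUt.
  have [tb|bt] := ltnP t (bnd i); last exact: j_early bt jUt.
  move/negP: j_later; apply; rewrite jUt map_f // mem_iota.
  have := leq_bigmax_In bnd si; move: Tt; rewrite leq_eqVlt => /orP[/eqP Tt|]; last by lia.
  by case: jUT; rewrite jUt Tt.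
exists m => s; have [f Hf] := proj1 (chiP s m) (Hm _ (ex_intro _ s erefl)).
by exists (mix s f m) => // j jU; rewrite /mix; case: ifP => // /laterP [t Tt jUt]; case: (jU t).
Qed.

End Step.

Lemma finsat_realized (I : Type) (th : I -> formula L) e :
  (forall i, exists B, depends_only (th i) (vars_before B)) ->
  finsat_from th 0 e -> exists2 w, agree_off 0 w e & forall i, sat w (th i).
Proof.
move=> /choice [bnd th_dep] fin0.
have step (ET : (nat -> M) * nat) : exists m, finsat_from th ET.2 ET.1 ->
    finsat_from th ET.2.+1 (upd ET.1 (U ET.2) m).
  case: ET => E T; have [/(finsat_from_step th_dep) [m Hm]|nfin] := pselect (finsat_from th T E).
    by exists m => _.
  by exists (E 0) => /nfin.
have [f Hf] := choice step.
pose env := fix env T := if T is T'.+1 then upd (env T') (U T') (f (env T', T')) else e.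
have env_fin T : finsat_from th T (env T) by elim: T => // T IH; apply: (Hf (env T, T)).
have env_stable T T' i : (T <= T')%N -> (forall t, (T <= t)%N -> i <> U t) ->
    env T' i = env T i.
  elim: T' => [|T' IH]; first by rewrite leqn0 => /eqP ->.
  rewrite leq_eqVlt => /orP[/eqP->//|]; rewrite ltnS => TT' iU.
  by rewrite /= /upd; case: eqP => [iUT'|_]; [case: (iU T')|exact: IH].
exists (fun i => env i.+1 i) => [i iU|i]; first by rewrite (env_stable 0) // => t _; apply: iU.
have [w wenv /(_ i (or_introl erefl)) wi] := env_fin (bnd i) [:: i].
suff agree j : vars_before (bnd i) j -> env j.+1 j = w j by apply/(th_dep i _ _ agree).
move=> [_ j_early]; rewrite wenv //.
have j_late t : (j < t)%N -> j <> U t by move=> jt jUt; have := U_ge t; rewrite -jUt leqNgt jt.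
rewrite -(env_stable (bnd i) (maxn (bnd i) j.+1)) ?leq_maxl //.
by rewrite (env_stable j.+1) ?leq_maxr.
Qed.

End CountableTypes.

Definition tuple_at (T : Type) (d : T) (k : nat) (y : 'I_k -> T) (t : nat) : T :=
  if insub t is Some j then y j else d.

Lemma tuple_at_ord (T : Type) (d : T) k (y : 'I_k -> T) (j : 'I_k) : tuple_at d y j = y j.
Proof. by rewrite /tuple_at valK. Qed.

Definition flat_tuples (T : Type) (d : T) (n : nat) (A : nat -> 'I_n -> T) (t : nat) : T :=
  tuple_at d (A (t %/ n)) (t %% n).

Lemma flat_tuples_at (T : Type) (d : T) n (A : nat -> 'I_n -> T) p (l : 'I_n) :
  flat_tuples d A (p * n + l) = A p l.
Proof.
have n_gt0 : (0 < n)%N by apply: leq_ltn_trans (ltn_ord l).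
rewrite /flat_tuples modnMDl divnMDl // modn_small // divn_small // addn0.
exact: tuple_at_ord.
Qed.

Section Shattering.
Variables (L : language) (M : structure L) (m0 : M).
Hypothesis Msat : aleph1_saturated M.
Variables (n k : nat) (phi : formula L).
Hypothesis phixy : is_formula_xy n k phi.

Definition shatters (A : nat -> 'I_n -> M) (r : nat) :=
  forall S : nat -> bool, exists y : 'I_k -> M,
    forall p, (p < r)%N -> (holds phi (A p) y <-> S p).

(* Two disjoint families of variables above those of [phi]; saturation is
   always used to realize the variables [slot false t]. *)
Definition slot (b : bool) (t : nat) := ((n + k).+1 + (b + t.*2))%N.

Definition fill (b : bool) (z : nat -> M) (e : nat -> M) (i : nat) :=
  if ((n + k).+1 <= i)%N && (odd (i - (n + k).+1) == b) then z (i - (n + k).+1)./2 else e i.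

Lemma slot_ge b t : (n + k <= slot b t)%N.
Proof. by rewrite /slot; lia. Qed.

Lemma fill_slot b z e t : fill b z e (slot b t) = z t.
Proof. by rewrite /fill /slot leq_addr addKn oddD odd_double addbF oddb eqxx half_bit_double. Qed.

Lemma fill_slot_neq b c z e t : b != c -> fill b z e (slot c t) = e (slot c t).
Proof.
by move=> bc; rewrite /fill /slot leq_addr addKn oddD odd_double addbF oddb eq_sym (negbTE bc).
Qed.

Lemma fill_off b z e i : (forall t, i <> slot b t) -> fill b z e i = e i.
Proof.
rewrite /fill => ivar; case: ifP => // /andP[ige /eqP oddb]; case: (ivar (i - (n + k).+1)./2).
by rewrite /slot -oddb odd_double_half subnKC.
Qed.

Definition fshatters (r : nat) (S : nat -> bool) :=
  fexs (map (slot true) (iota 0 k))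
    (fconjn (fun p => fsign (S p) (finst n k (fun l => slot false (p * n + l)) (slot true) phi)) r).

Lemma sat_fshatters r S e : sat e (fshatters r S) <->
  exists y : 'I_k -> M, forall p, (p < r)%N ->
    (holds phi (fun l : 'I_n => e (slot false (p * n + l))) y <-> S p).
Proof.
have fixed_x f p : (fun l : 'I_n =>
    if slot false (p * n + l) \in map (slot true) (iota 0 k) then f (slot false (p * n + l))
    else e (slot false (p * n + l))) = (fun l : 'I_n => e (slot false (p * n + l))).
  by apply: funext => l; case: ifP => // /mapP [j _]; rewrite /slot; lia.
have sat_inst e' p : sat e' (finst n k (fun l => slot false (p * n + l)) (slot true) phi) <->
    holds phi (fun l : 'I_n => e' (slot false (p * n + l))) (fun j : 'I_k => e' (slot true j)).
  by apply: sat_finst => // i; apply: slot_ge.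
have yvar (j : 'I_k) : slot true j \in map (slot true) (iota 0 k).
  by rewrite map_f // mem_iota add0n ltn_ord.
rewrite sat_fexs; split=> [[f /sat_fconjn Hf]|[y Hy]].
  exists (fun j : 'I_k => f (slot true j)) => p pr.
  move: (Hf p pr); rewrite sat_fsign sat_inst fixed_x.
  rewrite (_ : (fun j : 'I_k => _) = (fun j : 'I_k => f (slot true j))) //.
  by apply: funext => j; rewrite yvar.
exists (fill true (tuple_at m0 y) e); apply/sat_fconjn => p pr.
rewrite sat_fsign sat_inst fixed_x.
rewrite (_ : (fun j : 'I_k => _) = y); first exact: Hy.
by apply: funext => j; rewrite yvar fill_slot tuple_at_ord.
Qed.

Lemma slot_false_neq0 t : slot false t <> 0.
Proof. by rewrite /slot. Qed.

Lemma slot_false_ge t : (t <= slot false t)%N.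
Proof. by rewrite /slot /=; lia. Qed.

Lemma shatters_uniform :
  (forall r, exists A, shatters A r) -> exists A, forall r, shatters A r.
Proof.
move=> shatters_r.
pose th (x : nat * (nat -> bool)) := fshatters x.1 x.2.
have th_dep x : exists B, depends_only M (th x) (vars_before (slot false) B).
  case: x => r S; exists (r * n) => e1 e2 e12; rewrite /th !sat_fshatters.
  have e12_x p : (p < r)%N ->
      (fun l : 'I_n => e1 (slot false (p * n + l))) = (fun l => e2 (slot false (p * n + l))).
    move=> pr; apply: funext => l; apply: e12; split=> [|t rt]; rewrite /slot /=; first by lia.
    by have := ltn_ord l; nia.
  by split=> [[y Hy]|[y Hy]]; exists y => p pr; [rewrite -e12_x|rewrite e12_x]; auto.
have fin0 : finsat_from (slot false) th 0 (fun _ => m0).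
  move=> s; have [A HA] := shatters_r (\max_(x <- s) x.1).
  exists (fill false (flat_tuples m0 A) (fun _ => m0)) => [i ivar|[r S] xs].
    by apply: fill_off => t; apply: ivar.
  apply/sat_fshatters; have [y Hy] := HA S; exists y => p pr.
  rewrite (_ : (fun l => _) = A p); last by apply: funext => l; rewrite fill_slot flat_tuples_at.
  by apply: Hy; apply: leq_trans pr (leq_bigmax_In fst xs).
have [w _ Hw] := finsat_realized Msat slot_false_neq0 slot_false_ge th_dep fin0.
by exists (fun p l => w (slot false (p * n + l))) => r S; move/sat_fshatters: (Hw (r, S)).
Qed.

Lemma shatters_IP A : (forall r, shatters A r) ->
  forall S : set nat, exists b : 'I_k -> M, forall i, holds phi (A i) b <-> S i.
Proof.
move=> shA S.
pose th p := fsign `[< S p >] (finst n k (fun l => slot true (p * n + l)) (slot false) phi).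
pose e := fill true (flat_tuples m0 A) (fun _ => m0).
have sat_th (w : nat -> M) p : sat w (th p) <->
    (holds phi (fun l : 'I_n => w (slot true (p * n + l))) (fun j : 'I_k => w (slot false j))
     <-> `[< S p >]).
  by rewrite sat_fsign sat_finst // => i; apply: slot_ge.
have th_dep p : exists B, depends_only M (th p) (vars_before (slot false) B).
  exists k => e1 e2 e12; rewrite !sat_th.
  rewrite (_ : (fun l : 'I_n => _) = (fun l : 'I_n => e2 (slot true (p * n + l)))); last first.
    by apply: funext => l; apply: e12; split=> [|t _]; rewrite /slot /=; lia.
  rewrite (_ : (fun j : 'I_k => _) = (fun j : 'I_k => e2 (slot false j))) //.
  by apply: funext => j; apply: e12; split=> [|t kt]; rewrite /slot /=; have := ltn_ord j; lia.
have fin0 : finsat_from (slot false) th 0 e.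
  move=> s; have [y Hy] := shA (\max_(p <- s) p.+1) (fun p => `[< S p >]).
  exists (fill false (tuple_at m0 y) e) => [i ivar|p ps].
    by apply: fill_off => t; apply: ivar.
  apply/sat_th; rewrite (_ : (fun l : 'I_n => _) = A p); last first.
    by apply: funext => l; rewrite fill_slot_neq // /e fill_slot flat_tuples_at.
  rewrite (_ : (fun j : 'I_k => _) = y); last by apply: funext => j; rewrite fill_slot tuple_at_ord.
  by apply: Hy; exact: leq_bigmax_In (fun p => p.+1) _ _ ps.
have [w we Hw] := finsat_realized Msat slot_false_neq0 slot_false_ge th_dep fin0.
exists (fun j : 'I_k => w (slot false j)) => i.
have -> : A i = (fun l : 'I_n => w (slot true (i * n + l))).
  by apply: funext => l; rewrite we /e ?fill_slot ?flat_tuples_at // => t _; rewrite /slot /=; lia.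
by rewrite -[S i]asboolE -sat_th.
Qed.

Lemma finitely_shattered_IP : (forall r, exists A, shatters A r) ->
  exists A : nat -> 'I_n -> M, forall S : set nat, exists b : 'I_k -> M,
    forall i, holds phi (A i) b <-> S i.
Proof. by move=> /shatters_uniform [A shA]; exists A; apply: shatters_IP. Qed.

End Shattering.

Lemma sorted_ltn_in_range (u : nat -> nat) (s : seq nat) :
  {homo u : i j / (i < j)%N} -> sorted ltn s -> (forall x, x \in s -> exists p, x = u p) ->
  exists2 pi, sorted ltn pi & s = map u pi.
Proof.
move=> u_inc; elim: s => [|x s IH] s_sorted s_u; first by exists [::].
have [pi pi_sorted s_pi] : exists2 pi, sorted ltn pi & s = map u pi.
  by apply: IH (path_sorted s_sorted) _ => y ys; apply: s_u; rewrite in_cons ys orbT.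
have [p x_p] := s_u x (mem_head x s).
exists (p :: pi); last by rewrite x_p s_pi.
move: s_sorted; rewrite x_p s_pi; case: pi pi_sorted {s_pi} => [//|q pi] /= -> /andP[upq _].
by rewrite -(leqW_mono (leq_mono u_inc)) upq.
Qed.

Lemma infinitely_often_bool (c : nat -> bool) : exists b, forall N, exists2 t, (N <= t)%N & c t = b.
Proof.
have [often_true|] := pselect (forall N, exists2 t, (N <= t)%N & c t = true).
  by exists true.
move=> /existsNP [N0 /forall2NP not_true]; exists false => N.
exists (maxn N N0); first exact: leq_maxl.
by case: (not_true (maxn N N0)) => [/(_ (leq_maxr _ _))|] // /negP/negbTE.
Qed.

Lemma increasing_often (P : nat -> Prop) : (forall N, exists2 t, (N <= t)%N & P t) ->
  exists2 e : nat -> nat, {homo e : i j / (i < j)%N} & forall i, P (e i).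
Proof.
move=> often; have /choice [g gP] : forall N, exists t, (N <= t)%N /\ P t.
  by move=> N; have [t] := often N; exists t.
pose e := fix e i := if i is i'.+1 then g (e i').+1 else g 0.
exists e => [|[|i]]; try exact: (gP _).2.
by apply: homo_ltn => [y x z|i]; [exact: ltn_trans|exact: (gP _).1].
Qed.

Lemma ramsey m (c : seq nat -> bool) : exists2 h : nat -> nat, {homo h : i j / (i < j)%N} &
  exists b, forall s, size s = m -> sorted ltn s -> c (map h s) = b.
Proof.
(* [us T.+1] is a subsequence of [us T] beyond its head [x T], homogeneous for
   the colouring of m-sets completed by [x T]; along the heads [x T] the colour
   of an (m+1)-set thus only depends on its least element. *)
elim: m c => [|m IH] c; first by exists id => //; exists (c [::]) => [] [].
have /choice [F FP] : forall c' : seq nat -> bool, exists h : nat -> nat,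
    {homo h : i j / (i < j)%N} /\
    exists b, forall s, size s = m -> sorted ltn s -> c' (map h s) = b.
  by move=> c'; have [h] := IH c'; exists h.
pose head_col (u : nat -> nat) s := c (u 0 :: map (u \o succn) s).
pose next u i := u (F (head_col u) i).+1.
pose us T := iter T next id.
have us_inc T : {homo us T : i j / (i < j)%N}.
  by elim: T => // T IHT i j ij; apply: IHT; rewrite ltnS; apply: (FP _).1.
have us_later T d i : exists p, us (T + d) i = us T p.
  elim: d i => [|d IHd] i; first by exists i; rewrite addn0.
  by have [p Hp] := IHd (F (head_col (us (T + d))) i).+1; exists p; rewrite addnS -Hp.
have /choice [col colP] : forall T, exists b, forall s, size s = m -> sorted ltn s ->
    head_col (us T) (map (F (head_col (us T))) s) = b by move=> T; exact: (FP _).2.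
pose x t := us t 0.
have x_later T t : (T < t)%N -> exists p, x t = us T.+1 p.
  by move=> Tt; have [p Hp] := us_later T.+1 (t - T.+1) 0; exists p; rewrite -Hp subnKC.
have x_inc : {homo x : i j / (i < j)%N}.
  by move=> t t' /x_later [p ->]; apply: us_inc.
have [b often_b] := infinitely_often_bool col.
have [e e_inc e_col] := increasing_often often_b.
exists (x \o e); first by move=> i j ij; exact/x_inc/e_inc.
exists b => -[//|t0 s] /= [size_s] t0s_sorted.
have xe_sorted : sorted ltn (map (x \o e) s).
  by apply: homo_sorted (path_sorted t0s_sorted) => i j ij; exact/x_inc/e_inc.
have [pi pi_sorted s_pi] : exists2 pi, sorted ltn pi & map (x \o e) s = map (us (e t0).+1) pi.
  apply: sorted_ltn_in_range (us_inc _) xe_sorted _ => _ /mapP [t ts ->].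
  apply/x_later/e_inc.
  by move: t0s_sorted; rewrite (path_sortedE ltn_trans) => /andP[/allP /(_ t ts)].
rewrite -(e_col t0) -(colP (e t0) pi) //; first by rewrite /head_col -map_comp; congr (c (_ :: _)).
by have := congr1 size s_pi; rewrite !size_map size_s.
Qed.

Lemma cantor_prefix_near (q : cantor_space) N :
  \forall y \near q, forall i, (i < N)%N -> y i = q i.
Proof.
elim: N => [|N IH]; first by apply: filterE => y i.
have qN : \forall y \near q, y N = q N.
  exact: (@proj_continuous nat (fun _ => bool) N q _ (discrete_set1 (q N))).
apply: filterS (filterI IH qN) => y [yq yN] i.
by rewrite ltnS leq_eqVlt => /orP[/eqP->//|]; apply: yq.
Qed.

Definition alternates (l : nat) (q : cantor_space) := exists s : seq nat,
  [/\ sorted ltn s, size s = l & forall p, (p < l)%N -> q (nth 0 s p) = ~~ odd p].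

Lemma alternates_near l q : alternates l q -> \forall y \near q, alternates l y.
Proof.
move=> [s [s_sorted s_size s_alt]]; apply: filterS (cantor_prefix_near q (\max_(i <- s) i).+1).
move=> y yq; exists s; split=> // p pl; rewrite yq ?s_alt // ltnS.
by apply: leq_bigmax_seq => //; rewrite mem_nth ?s_size.
Qed.

Lemma sorted_rcons_ltn s i :
  sorted ltn s -> (\max_(j <- s) j < i)%N -> sorted ltn (rcons s i).
Proof.
case: s => [//|x s] /= xs_sorted xs_lt; rewrite rcons_path xs_sorted /=.
by apply: leq_ltn_trans xs_lt; apply: leq_bigmax_seq (mem_last x s) _.
Qed.

Lemma alternates_eventually l q : alternates l q -> ~ alternates l.+1 q ->
  \forall i \near \oo, q i = odd l.
Proof.
move=> [s [s_sorted s_size s_alt]] no_more; near=> i.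
have [//|qi] := eqVneq (q i) (odd l); case: no_more; exists (rcons s i); split.
- by apply: sorted_rcons_ltn => //; near: i; apply: nbhs_infty_gt.
- by rewrite size_rcons s_size.
- move=> p; rewrite ltnS leq_eqVlt nth_rcons s_size => /orP[/eqP->|pl].
    by rewrite ltnn eqxx; move: qi; case: (q i); case: (odd l).
  by rewrite pl s_alt.
Unshelve. all: by end_near.
Qed.

Definition alt_rank (m : nat) (q : cantor_space) : nat :=
  \max_(l < m.+1 | `[< alternates l q >]) l.

Lemma alt_rank_le m q : (alt_rank m q <= m)%N.
Proof. by apply/bigmax_leqP => l _; rewrite -ltnS. Qed.

Lemma alt_rank_ge m q l : (l <= m)%N -> alternates l q -> (l <= alt_rank m q)%N.
Proof.
by rewrite -ltnS => lm lq; apply: (leq_bigmax_cond (Ordinal lm)); apply/asboolP.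
Qed.

Lemma alternates_rank m q : alternates (alt_rank m q) q.
Proof.
have alt_gt0 : (0 < #|[pred l : 'I_m.+1 | `[< alternates l q >]]|)%N.
  by apply/card_gt0P; exists ord0; apply/asboolP; exists [::].
have [l lq rank_l] := eq_bigmax_cond val alt_gt0.
have -> : alt_rank m q = l by exact: rank_l.
by move: lq; rewrite inE.
Qed.

Lemma alt_rank_near m q : \forall y \near q, (alt_rank m q <= alt_rank m y)%N.
Proof.
apply: filterS (alternates_near (alternates_rank m q)) => y.
by apply: alt_rank_ge; apply: alt_rank_le.
Qed.

Lemma alt_rank_eventually m q : ~ alternates m q ->
  \forall i \near \oo, q i = odd (alt_rank m q).
Proof.
move=> not_m; apply: alternates_eventually (alternates_rank m q) _ => next.
have rank_lt : (alt_rank m q < m)%N.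
  rewrite ltn_neqAle alt_rank_le andbT; apply/eqP => rank_m; apply: not_m.
  by rewrite -rank_m; apply: alternates_rank.
by have := alt_rank_ge rank_lt next; rewrite ltnn.
Qed.

Section OddOfRank.
Local Open Scope ring_scope.
Variables (R : realType) (X : topologicalType) (K : set X) (rank : X -> nat) (m : nat).
Hypotheses (rank_le : forall x, (rank x <= m)%N)
  (rank_near : forall x, \forall y \near x, (rank x <= rank y)%N).

Let lsc_nat_rank (F : nat -> nat) : {homo F : i j / (i <= j)%N} ->
  lsc_on K (fun x => (F (rank x))%:R : R).
Proof.
move=> F_homo x _ e e_gt0; apply: filterS (rank_near x) => y /F_homo Fxy _.
by rewrite ltrBlDr; apply: (le_lt_trans (y := (F (rank y))%:R)); rewrite ?ler_nat ?ltrDl.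
Qed.

Let bounded_nat_rank (F : nat -> nat) : (forall j, F j <= j)%N ->
  bounded_on K (fun x => (F (rank x))%:R : R).
Proof.
by move=> F_le; exists m%:R => x _; rewrite normr_nat ler_nat (leq_trans (F_le _)).
Qed.

Lemma DBSC_odd_rank : DBSC_on K (fun x => (odd (rank x))%:R : R).
Proof.
exists (fun x => (uphalf (rank x))%:R), (fun x => ((rank x)./2)%:R).
split; [|split; [|split; [|split]]].
- by apply: bounded_nat_rank => j; lia.
- by left; apply: lsc_nat_rank => i j; apply: uphalf_leq.
- by apply: bounded_nat_rank => j; lia.
- by left; apply: lsc_nat_rank => i j; apply: half_leq.
- by move=> x _; rewrite uphalf_half natrD addrK.
Qed.

End OddOfRank.

Section TypeSpace.
Variables (L : language) (M : structure L) (n k : nat) (phi : formula L).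

Lemma closed_phi_type_space (a : nat -> 'I_n -> M) : closed (phi_type_space k phi a).
Proof.
move=> q q_cl N; have [q' [q'K q'q]] := q_cl _ (cantor_prefix_near q N).
by have [b Hb] := q'K N; exists b => i iN; rewrite Hb // q'q.
Qed.

Definition alt_realized (a : nat -> 'I_n -> M) (s : seq nat) := exists y : 'I_k -> M,
  forall p, (p < size s)%N -> (holds phi (a (nth 0 s p)) y <-> ~~ odd p).

Lemma type_space_alternates a q m : phi_type_space k phi a q -> alternates m q ->
  exists2 s, size s = m /\ sorted ltn s & alt_realized a s.
Proof.
move=> qK [s [s_sorted s_size s_alt]]; exists s => //.
have [y Hy] := qK (\max_(i <- s) i).+1; exists y => p ps.
rewrite Hy ?s_alt -?s_size //.
by rewrite ltnS; apply: leq_bigmax_seq => //; apply: mem_nth.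
Qed.

Lemma alt_realized_comp a h s : alt_realized (a \o h) s -> alt_realized a (map h s).
Proof.
by move=> [y Hy]; exists y => p; rewrite size_map => ps; rewrite (nth_map 0) //; apply: Hy.
Qed.

End TypeSpace.

Lemma C_order_alternates (R : realType) (Cl : set cantor_space -> (cantor_space -> R) -> Prop)
  (HClDBSC : forall K f, closed K -> DBSC_on K f -> Cl K f)
  (L : language) (M : structure L) n k (phi : formula L)
  (a : nat -> 'I_n -> M) (b : nat -> 'I_k -> M) :
  is_C M Cl -> is_formula_xy n k phi -> (forall i j, holds phi (a i) (b j) <-> (i < j)%N) ->
  forall m, exists2 s, size s = m /\ sorted ltn s & alt_realized k phi a s.
Proof.
move=> C phixy ab m; apply: contrapT => no_alt.
have not_alt_m q : phi_type_space k phi a q -> ~ alternates m q.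
  by move=> qK /(type_space_alternates qK) [s s_ok s_alt]; apply: no_alt; exists s.
apply: (C n k phi a phixy) (ex_intro _ b ab).
exists (fun q => ((odd (alt_rank m q))%:R)%R); split.
  apply: HClDBSC; first exact: closed_phi_type_space.
  exact: DBSC_odd_rank (@alt_rank_le m) (@alt_rank_near m).
move=> q qK; apply: cvg_near_cst.
by apply: filterS (alt_rank_eventually (not_alt_m q qK)) => i ->.
Qed.

Lemma shatters_of_alternations (L : language) (M : structure L) n k (phi : formula L)
  (a : nat -> 'I_n -> M) :
  (forall h, {homo h : i j / (i < j)%N} ->
     forall m, exists2 s, size s = m /\ sorted ltn s & alt_realized k phi a (map h s)) ->
  forall r, exists A : nat -> 'I_n -> M, shatters k phi A r.
Proof.
move=> alt r.
have [h h_inc [c hom]] := ramsey (2 * r) (fun s => `[< alt_realized k phi a s >]).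
have all_alt s : size s = 2 * r -> sorted ltn s -> alt_realized k phi a (map h s).
  have [s0 [s0_size s0_sorted] /asboolP s0_alt] := alt h h_inc (2 * r).
  by move=> s_size s_sorted; apply/asboolP; rewrite hom // -(hom s0).
exists (fun p => a (h (3 * p + 1))) => S.
(* The pair of positions 2p, 2p+1 of the alternating pattern goes to
   3p + S p, 3p + S p + 1: so 3p+1 sits at an even position iff S p holds. *)
pose f j := 3 * (j %/ 2) + S (j %/ 2) + j %% 2.
have f_inc : {homo f : i j / (i < j)%N}.
  apply: homo_ltn => [y x z|j]; first exact: ltn_trans.
  rewrite /f; have [E|E] : j.+1 %/ 2 = j %/ 2 \/ j.+1 %/ 2 = (j %/ 2).+1 by lia.
    by rewrite E; lia.
  by rewrite E; have := leq_b1 (S (j %/ 2)); lia.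
have [y Hy] : alt_realized k phi a (map h (map f (iota 0 (2 * r)))).
  apply: all_alt; first by rewrite size_map size_iota.
  by apply: homo_sorted (iota_ltn_sorted 0 _) => i j; apply: f_inc.
exists y => p pr; pose q := 2 * p + ~~ S p.
have qr : (q < 2 * r)%N by rewrite /q; have := leq_b1 (~~ S p); lia.
move: (Hy q); rewrite !size_map size_iota => /(_ qr).
rewrite (nth_map 0) ?size_map ?size_iota // (nth_map 0) ?size_iota // nth_iota // add0n.
have q_half : q %/ 2 = p by rewrite /q; case: (S p) => /=; lia.
have -> : f q = 3 * p + 1 by rewrite /f q_half /q; case: (S p) => /=; lia.
by rewrite /q oddD mul2n odd_double /=; case: (S p).
Qed.

Lemma stable_NIP (L : language) (M : structure L) : stable M -> NIP M.
Proof.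
move=> st n k phi phixy [a shattered]; apply: (st n k phi phixy).
have /choice [b Hb] : forall j, exists b : 'I_k -> M, forall i, holds phi (a i) b <-> (i < j)%N.
  by move=> j; apply: shattered.
by exists a, b.
Qed.

Lemma stable_is_C (R : realType) (Cl : set cantor_space -> (cantor_space -> R) -> Prop)
  (L : language) (M : structure L) : stable M -> is_C M Cl.
Proof. by move=> st n k phi a phixy _ [b ab]; apply: (st n k phi phixy); exists a, b. Qed.

Lemma NIP_is_C_stable (R : realType) (Cl : set cantor_space -> (cantor_space -> R) -> Prop)
  (HClDBSC : forall K f, closed K -> DBSC_on K f -> Cl K f)
  (L : language) (M : structure L) (m0 : M) :
  aleph1_saturated M -> NIP M -> is_C M Cl -> stable M.
Proof.
move=> Msat nip C n k phi phixy [a [b ab]]; apply: (nip n k phi phixy).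
apply: (finitely_shattered_IP m0 Msat phixy).
apply: (shatters_of_alternations (a := a)) => h h_inc m.
have [s s_ok s_alt] : exists2 s, size s = m /\ sorted ltn s & alt_realized k phi (a \o h) s.
  apply: (C_order_alternates HClDBSC C phixy (b := b \o h)) => i j.
  by rewrite -(leqW_mono (leq_mono h_inc) i j); apply: ab.
by exists s => //; apply: alt_realized_comp.
Qed.

Theorem proposition3p6 (R : realType)
  (Cl : set cantor_space -> (cantor_space -> R) -> Prop)
  (HClB1 : forall K f, closed K -> Cl K f -> baire1_on K f)
  (HClDBSC : forall K f, closed K -> DBSC_on K f -> Cl K f)
  (L : language) (M : structure L) (m0 : M)
  (Hsat : aleph1_saturated M) :
  stable M <-> (NIP M /\ is_C M Cl).
Proof.
split=> [st|[nip C]]; first by split; [exact: stable_NIP|exact: stable_is_C].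
exact: (NIP_is_C_stable HClDBSC m0 Hsat nip C).
Qed.
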